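(* Let $\eta\in\mathbb{F}_{2^n}$ with $\mathbb{F}_{2^n}=\mathbb{F}_2(\eta)$, let $m\in\mathbb{N}$ and let $M_1,\dots,M_n$ satisfy $\emptyset\neq M_i\subsetneq[m]$ for $1\le i\le n$. Let $D=\Delta_{M_1}+\eta\Delta_{M_2}+\cdots+\eta^{n-1}\Delta_{M_n}\subseteq\mathbb{F}_{2^n}^m$ and $D^*=D\setminus\{0\}$. Then $C_{D^*}$ is a linear code over $\mathbb{F}_{2^n}$ of length $2^{\sum_{j=1}^n|M_j|}-1$ and dimension $|\bigcup_{j=1}^nM_j|$. If $A_i$ denotes the number of codewords of $C_{D^*}$ of weight $i$ and $Z_i=|\{v\in\mathbb{F}_{2^n}^m: wt(c_{D^*}(v))=i\}|$ for $0\le i\le|D^*|$, then $Z_0=2^{n(m-|\bigcup_{j=1}^nM_j|)}$ and $Z_i=Z_0A_i$ for $1\le i\le|D^*|$.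
   Context: $[m]=\{1,\dots,m\}$; $\Delta_L=\{w\in\mathbb{F}_2^m:\{i:w_i\ne0\}\subseteq L\}$. $\Delta_{M_1}+\eta\Delta_{M_2}+\cdots+\eta^{n-1}\Delta_{M_n}=\{d_1+\eta d_2+\cdots+\eta^{n-1}d_n: d_i\in\Delta_{M_i}\}$. For an ordered finite set $P\subseteq\mathbb{F}_{2^n}^m$, $c_P(v)=(v\cdot d)_{d\in P}$ with $v\cdot d=\sum_iv_id_i$, and $C_P=\{c_P(v):v\in\mathbb{F}_{2^n}^m\}$. *)

From HB Require Import structures.
From mathcomp Require Import all_boot all_order all_algebra.
Set Implicit Arguments. Unset Strict Implicit. Unset Printing Implicit Defensive.
Import GRing.Theory.
Local Open Scope ring_scope.

(* F_2(eta) = F : F is the smallest subfield of F containing eta, i.e. every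
   subset of F closed under the field operations and containing eta is all of F. *)
Definition generates_field (F : fieldType) (eta : F) : Prop :=
  forall S : {pred F},
    0 \in S -> 1 \in S ->
    {in S &, forall a b, a + b \in S} ->
    {in S &, forall a b, a * b \in S} ->
    {in S, forall a, - a \in S} ->
    {in S, forall a, a^-1 \in S} ->
    eta \in S -> forall x, x \in S.

Definition embF2 (F : fieldType) (x : 'F_2) : F := (nat_of_ord x)%:R.

Definition Delta (m : nat) (L : {set 'I_m}) : {set 'rV['F_2]_m} :=
  [set w : 'rV['F_2]_m | [forall j, (w 0 j != 0) ==> (j \in L)]].

(* D = Delta_{M_1} + eta Delta_{M_2} + ... + eta^{n-1} Delta_{M_n} (indices 0-based) *)
Definition Dset (F : finFieldType) (n m : nat) (eta : F) (M : 'I_n -> {set 'I_m})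
  : {set 'rV[F]_m} :=
  [set v : 'rV[F]_m | [exists d : {ffun 'I_n -> 'rV['F_2]_m},
      [forall i, d i \in Delta (M i)] &&
      (v == \sum_(i < n) eta ^+ i *: map_mx (@embF2 F) (d i))]].

Definition Dstar (F : finFieldType) (n m : nat) (eta : F) (M : 'I_n -> {set 'I_m})
  : {set 'rV[F]_m} := Dset eta M :\ 0.

Definition cP (F : finFieldType) (m : nat) (P : {set 'rV[F]_m}) (v : 'rV[F]_m)
  : 'rV[F]_#|P| :=
  \row_(k < #|P|) \sum_(j < m) v 0 j * (enum_val k : 'rV[F]_m) 0 j.

Definition codeP (F : finFieldType) (m : nat) (P : {set 'rV[F]_m})
  : {set 'rV[F]_#|P|} := [set cP P v | v : 'rV[F]_m].

Definition wt (F : finFieldType) (N : nat) (c : 'rV[F]_N) : nat :=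
  #|[set k : 'I_N | c 0 k != 0]|.

From HB Require Import structures.
From mathcomp Require Import all_boot all_order all_algebra all_field.
Import GRing.Theory.
Local Open Scope ring_scope.
Set Implicit Arguments. Unset Strict Implicit. Unset Printing Implicit Defensive.

(* Over F_2 the powers 1, eta, ..., eta^(n-1) are linearly independent: if some
   eta^d with d < n were an F_2-combination of lower powers, these combinations
   would be closed under the field operations, hence would exhaust F = F_2(eta),
   which has 2^n > 2^d elements.  So D is in bijection with the subsets of
   {(i, j) | j \in M_i} and |D| = 2^(sum |M_i|).
   C_{D*} is the image of v |-> v G, where the columns of G are the points of D*.
   These points are supported on U = \bigcup M_i, and D* contains eta^i e_j for
   j \in M_i, so the kernel of G consists of the v vanishing on U.  This gives
   the dimension |U| and Z_0 = |F|^(m - |U|); and since every codeword has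
   exactly Z_0 preimages, Z_i = Z_0 A_i. *)

Lemma invf_expr_card (F : finFieldType) (x : F) : x != 0 -> x^-1 = x ^+ #|F|.-2.
Proof.
move=> x_neq0; apply: (mulfI x_neq0); rewrite divff //; apply: (mulfI x_neq0).
rewrite mulr1 mulrA -expr2 -exprD.
have := card_finNzRing_gt1 F; move: (expf_card x).
by case: #|F| => [|[|q]] //= ->.
Qed.

Section BitCombinations.

Variables (F : finFieldType) (eta : F).
Hypothesis pchar2 : 2 \in [pchar F].

Lemma natr_addb (a b : bool) : ((a (+) b)%:R : F) = a%:R + b%:R.
Proof. by case: a; case: b; rewrite /= ?add0r ?addr0 // (addrr_pchar2 pchar2). Qed.

Definition bitcomb d (a : 'I_d -> bool) : F := \sum_(i < d) eta ^+ i * (a i)%:R.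

Definition bitspan d : {set F} := [set bitcomb a | a : {ffun 'I_d -> bool}].

Lemma mem_bitspan d (a : 'I_d -> bool) : bitcomb a \in bitspan d.
Proof.
by apply/imsetP; exists [ffun i => a i] => //; apply: eq_bigr => i _; rewrite ffunE.
Qed.

Lemma bitspan0 d : 0 \in bitspan d.
Proof.
have -> : 0 = bitcomb (fun _ : 'I_d => false).
  by rewrite /bitcomb big1 // => i _; rewrite mulr0.
exact: mem_bitspan.
Qed.

Lemma bitcombD d (a b : 'I_d -> bool) :
  bitcomb a + bitcomb b = bitcomb (fun i => a i (+) b i).
Proof. by rewrite -big_split; apply: eq_bigr => i _; rewrite natr_addb mulrDr. Qed.

Lemma bitspanD d x y : x \in bitspan d -> y \in bitspan d -> x + y \in bitspan d.
Proof. by move=> /imsetP[a _ ->] /imsetP[b _ ->]; rewrite bitcombD mem_bitspan. Qed.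

Lemma bitspan_sum d (I : finType) (f : I -> F) :
  (forall i, f i \in bitspan d) -> \sum_i f i \in bitspan d.
Proof.
move=> f_in; apply: (big_ind (fun x => x \in bitspan d)) => //.
  exact: bitspan0.
exact: bitspanD.
Qed.

Lemma bitspan_mulb d x (b : bool) : x \in bitspan d -> x * b%:R \in bitspan d.
Proof. by case: b; rewrite ?mulr1 ?mulr0 ?bitspan0. Qed.

Lemma bitspan_expr_lt d j : (j < d)%N -> eta ^+ j \in bitspan d.
Proof.
move=> lt_jd; have := mem_bitspan (fun i : 'I_d => i == Ordinal lt_jd).
rewrite /bitcomb (bigD1 (Ordinal lt_jd)) //= eqxx mulr1 big1 ?addr0 // => i /negbTE ->.
by rewrite mulr0.
Qed.

Section ClosedSpan.

Variable d : nat.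
Hypothesis expr_d_in : eta ^+ d \in bitspan d.

Lemma bitspan_mulX x : x \in bitspan d -> eta * x \in bitspan d.
Proof.
move=> /imsetP[a _ ->]; rewrite mulr_sumr; apply: bitspan_sum => i.
rewrite mulrA -exprS; apply: bitspan_mulb.
have [/bitspan_expr_lt //|] := ltnP i.+1 d.
by rewrite leq_eqVlt ltnNge ltn_ord orbF => /eqP <-.
Qed.

Lemma bitspan_expr j : eta ^+ j \in bitspan d.
Proof.
elim: j => [|j IHj]; last by rewrite exprS bitspan_mulX.
by case: d expr_d_in => [//|d' _]; apply: bitspan_expr_lt.
Qed.

Lemma bitspanM x y : x \in bitspan d -> y \in bitspan d -> x * y \in bitspan d.
Proof.
move=> x_in /imsetP[b _ ->]; rewrite mulr_sumr; apply: bitspan_sum => i.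
rewrite mulrA; apply: bitspan_mulb.
elim: (nat_of_ord i) => [|k IHk]; first by rewrite mulr1.
by rewrite exprS mulrCA bitspan_mulX.
Qed.

Lemma bitspanX x k : x \in bitspan d -> x ^+ k \in bitspan d.
Proof.
move=> x_in; elim: k => [|k IHk]; last by rewrite exprS bitspanM.
by rewrite expr0 -(expr0 eta) bitspan_expr.
Qed.

Lemma bitspanV x : x \in bitspan d -> x^-1 \in bitspan d.
Proof.
have [-> _|x_neq0 x_in] := eqVneq x 0; first by rewrite invr0 bitspan0.
by rewrite invf_expr_card // bitspanX.
Qed.

Lemma bitspan_full : generates_field eta -> forall x, x \in bitspan d.
Proof.
move=> eta_gen; apply: (eta_gen [pred x | x \in bitspan d]); rewrite ?inE.
- exact: bitspan0.
- by rewrite -(expr0 eta) bitspan_expr.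
- by move=> x y; rewrite !inE; apply: bitspanD.
- by move=> x y; rewrite !inE; apply: bitspanM.
- by move=> x; rewrite !inE (oppr_pchar2 pchar2).
- by move=> x; rewrite !inE; apply: bitspanV.
- by rewrite -(expr1 eta) bitspan_expr.
Qed.

End ClosedSpan.

Lemma card_bitspan d : (#|bitspan d| <= 2 ^ d)%N.
Proof.
by apply: leq_trans (leq_imset_card _ _) _; rewrite card_ffun card_bool card_ord.
Qed.

End BitCombinations.

Section FieldOfOrderPow2.

Variables (F : finFieldType) (n : nat) (eta : F).
Hypotheses (F_card : #|F| = (2 ^ n)%N) (eta_gen : generates_field eta).

Let pchar2 : 2 \in [pchar F] := card_finPcharP F_card isT.

Lemma expr_notin_bitspan d : (d < n)%N -> eta ^+ d \notin bitspan eta d.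
Proof.
move=> lt_dn; apply/negP => expr_d_in.
have : (#|F| <= 2 ^ d)%N.
  apply: leq_trans (card_bitspan eta d); rewrite -cardsT subset_leq_card //.
  by apply/subsetP => x _; apply: bitspan_full.
by rewrite F_card leq_exp2l // leqNgt lt_dn.
Qed.

Lemma expr_eta_neq0 i : (i < n)%N -> eta ^+ i != 0.
Proof.
by move=> /expr_notin_bitspan; apply: contraNneq => ->; apply: bitspan0.
Qed.

Lemma bitcomb_eq0 d (c : 'I_d -> bool) :
  (d <= n)%N -> bitcomb eta c = 0 -> forall i, c i = false.
Proof.
elim: d c => [|d IHd] c le_dn; first by move=> _ [].
rewrite /bitcomb big_ord_recr /=; case c_max: (c ord_max) => c_eq0.
  have := expr_notin_bitspan le_dn.
  move/eqP: c_eq0; rewrite mulr1 addrC addr_eq0 (oppr_pchar2 pchar2) => /eqP ->.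
  by rewrite (mem_bitspan _ (fun j => c (widen_ord (leqnSn d) j))).
move: c_eq0; rewrite mulr0 addr0 => /(IHd _ (ltnW le_dn)) c_eq0 i.
have [lt_id|le_di] := ltnP i d.
  by rewrite -(c_eq0 (Ordinal lt_id)); congr c; apply: val_inj.
have -> : i = ord_max by apply: val_inj; apply/eqP; rewrite eqn_leq le_di -ltnS ltn_ord.
exact: c_max.
Qed.

Lemma bitcomb_inj (a b : 'I_n -> bool) : bitcomb eta a = bitcomb eta b -> a =1 b.
Proof.
move=> eq_ab i; have : a i (+) b i = false.
  apply: (bitcomb_eq0 (leqnn n) (c := fun j => a j (+) b j)).
  by rewrite -bitcombD // eq_ab (addrr_pchar2 pchar2).
by case: (a i) (b i) => [] [].
Qed.

End FieldOfOrderPow2.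

Definition pointsmx (F : finFieldType) m (P : {set 'rV[F]_m}) : 'M[F]_(m, #|P|) :=
  \matrix_(j, k) (enum_val k : 'rV[F]_m) 0 j.

Lemma cP_pointsmx (F : finFieldType) m (P : {set 'rV[F]_m}) v : cP P v = v *m pointsmx P.
Proof. by apply/rowP => k; rewrite !mxE; apply: eq_bigr => j _; rewrite mxE. Qed.

Lemma mul_pointsmx_eq0 (F : finFieldType) m (P : {set 'rV[F]_m}) (v : 'rV[F]_m) :
  reflect {in P, forall d : 'rV[F]_m, \sum_j v 0 j * d 0 j = 0} (v *m pointsmx P == 0).
Proof.
apply: (iffP eqP) => [v_ker d d_in | v_orth].
  have /rowP/(_ (enum_rank_in d_in d)) := v_ker.
  by rewrite !mxE; under eq_bigr do rewrite mxE enum_rankK_in //.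
apply/rowP => k; rewrite !mxE -[RHS](v_orth _ (enum_valP k)).
by apply: eq_bigr => j _; rewrite mxE.
Qed.

Lemma embF2E (F : fieldType) (x : 'F_2) : embF2 F x = (x != 0)%:R.
Proof. by case: x => [[|[|//]] ?]. Qed.

Section DeltaSum.

Variables (F : finFieldType) (n m : nat) (eta : F) (M : 'I_n -> {set 'I_m}).

Definition Mgraph : {set 'I_n * 'I_m} := [set p | p.2 \in M p.1].

Definition Dvec (S : {set 'I_n * 'I_m}) : 'rV[F]_m :=
  \row_j bitcomb eta (fun i => (i, j) \in S).

Lemma card_Mgraph : #|Mgraph| = (\sum_(i < n) #|M i|)%N.
Proof.
under eq_bigr do rewrite -sum1_card.
by rewrite pair_big_dep /= -sum1_card; apply: eq_bigl => p; rewrite inE.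
Qed.

Lemma Dset_Dvec : Dset eta M = Dvec @: powerset Mgraph.
Proof.
apply/setP => v; rewrite inE; apply/existsP/imsetP.
  case=> d /andP[/forallP d_in /eqP ->]; exists [set p | d p.1 0 p.2 != 0].
    rewrite powersetE; apply/subsetP => -[i j]; rewrite !inE /= => d_ij.
    by have := d_in i; rewrite inE => /forallP /(_ j) /implyP; apply.
  apply/rowP => j; rewrite !mxE summxE; apply: eq_bigr => i _.
  by rewrite !mxE inE embF2E.
case=> S; rewrite powersetE => /subsetP S_sub ->.
exists [ffun i => \row_j (((i, j) \in S)%:R : 'F_2)]; apply/andP; split.
  apply/forallP => i; rewrite inE; apply/forallP => j; apply/implyP.
  rewrite ffunE mxE; case: (boolP ((i, j) \in S)) => // /S_sub.
  by rewrite inE.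
apply/eqP/rowP => j; rewrite !mxE summxE; apply: eq_bigr => i _.
by rewrite !mxE ffunE mxE embF2E; case: ((i, j) \in S).
Qed.

Lemma Dset0 : 0 \in Dset eta M.
Proof.
rewrite Dset_Dvec; apply/imsetP; exists set0; first by rewrite powersetE sub0set.
by apply/rowP => j; rewrite !mxE /bitcomb big1 // => i _; rewrite inE mulr0.
Qed.

Lemma Dset_supp v j : v \in Dset eta M -> j \notin \bigcup_i M i -> v 0 j = 0.
Proof.
rewrite Dset_Dvec => /imsetP[S]; rewrite powersetE => /subsetP S_sub -> j_notin.
rewrite mxE /bitcomb big1 // => i _; case: (boolP ((i, j) \in S)); last by rewrite mulr0.
by move/S_sub; rewrite inE /= => j_in; case/negP: j_notin; apply/bigcupP; exists i.
Qed.

Lemma Dvec_set1 i j : Dvec [set (i, j)] = eta ^+ i *: delta_mx 0 j.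
Proof.
apply/rowP => j'; rewrite !mxE /bitcomb (bigD1 i) //= big1 ?addr0.
  by rewrite inE !xpair_eqE eqxx /=; case: (j' == j); rewrite ?mulr1 ?mulr0.
by move=> i' /negbTE ne_i'i; rewrite inE xpair_eqE ne_i'i mulr0.
Qed.

Hypotheses (F_card : #|F| = (2 ^ n)%N) (eta_gen : generates_field eta).

Lemma Dvec_inj : injective Dvec.
Proof.
move=> S S' eq_SS'; apply/setP => -[i j].
apply: (bitcomb_inj F_card eta_gen
  (a := fun i => (i, j) \in S) (b := fun i => (i, j) \in S')).
by have := congr1 (fun v : 'rV[F]_m => v 0 j) eq_SS'; rewrite !mxE.
Qed.

Lemma card_Dset : #|Dset eta M| = (2 ^ (\sum_(i < n) #|M i|))%N.
Proof. by rewrite Dset_Dvec card_imset ?card_powerset ?card_Mgraph //; apply: Dvec_inj. Qed.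

Lemma card_Dstar : #|Dstar eta M| = (2 ^ (\sum_(i < n) #|M i|) - 1)%N.
Proof. by rewrite -card_Dset (cardsD1 0 (Dset eta M)) Dset0 add1n subn1. Qed.

Lemma Dstar_delta i j : j \in M i -> eta ^+ i *: delta_mx 0 j \in Dstar eta M.
Proof.
move=> j_in; rewrite in_setD1 Dset_Dvec -Dvec_set1 imset_f ?andbT; last first.
  by rewrite powersetE sub1set inE.
rewrite Dvec_set1; apply: contraTneq isT => /rowP /(_ j); rewrite !mxE !eqxx mulr1.
by move/eqP; rewrite (negbTE (expr_eta_neq0 F_card eta_gen (ltn_ord i))).
Qed.

Lemma Dstar_kernel (v : 'rV[F]_m) :
  (v *m pointsmx (Dstar eta M) == 0) = [forall j in \bigcup_i M i, v 0 j == 0].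
Proof.
apply/mul_pointsmx_eq0/forall_inP => [v_orth j | v_vanish d].
  case/bigcupP=> i _ j_in; have := v_orth _ (Dstar_delta j_in).
  rewrite (bigD1 j) //= big1 ?addr0 => [|j' /negbTE ne_j'j]; last first.
    by rewrite !mxE ne_j'j andbF mulr0 mulr0.
  rewrite !mxE !eqxx mulr1 => /eqP; rewrite mulf_eq0.
  by rewrite (negbTE (expr_eta_neq0 F_card eta_gen (ltn_ord i))) orbF.
rewrite in_setD1 => /andP[_ d_in]; rewrite big1 // => j _.
have [/v_vanish/eqP ->|j_notin] := boolP (j \in \bigcup_i M i); first by rewrite mul0r.
by rewrite (Dset_supp d_in j_notin) mulr0.
Qed.

End DeltaSum.

Lemma card_rV_vanishing (F : finFieldType) m (U : {set 'I_m}) :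
  #|[set v : 'rV[F]_m | [forall j in U, v 0 j == 0]]| = (#|F| ^ (m - #|U|))%N.
Proof.
pose rowf (f : {ffun 'I_m -> F}) : 'rV[F]_m := \row_j f j.
have rowf_inj : injective rowf.
  by move=> f g /rowP eq_fg; apply/ffunP => j; have := eq_fg j; rewrite !mxE.
have -> : [set v : 'rV[F]_m | [forall j in U, v 0 j == 0]] =
          rowf @: pffun_on 0 (~: U) predT.
  apply/setP => v; rewrite inE; apply/forall_inP/imsetP => [v_vanish|[f f_on ->] j j_in].
    exists [ffun j => v 0 j]; last by apply/rowP => j; rewrite !mxE ffunE.
    apply/pffun_onP; split=> //; apply/subsetP => j; rewrite !inE ffunE.
    by apply: contra => /v_vanish.
  case/pffun_onP: f_on => /subsetP f_supp _; rewrite mxE; apply: contraTT j_in.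
  by move=> /f_supp; rewrite inE.
by rewrite card_imset // card_pffun_on [#|~: U|]cardsCs setCK card_ord.
Qed.

Lemma wt_eq0 (F : finFieldType) N (c : 'rV[F]_N) : (wt c == 0%N) = (c == 0).
Proof.
rewrite /wt cards_eq0; apply/eqP/eqP => [c_eq0|->].
  apply/rowP => k; rewrite mxE; apply/eqP.
  by have /setP/(_ k) := c_eq0; rewrite !inE => /negbFE.
by apply/setP => k; rewrite !inE mxE eqxx.
Qed.

Section LinearCode.

Variables (F : finFieldType) (m N : nat) (G : 'M[F]_(m, N)).

Lemma card_fiber c : c \in [set v *m G | v : 'rV[F]_m] ->
  #|[set v : 'rV[F]_m | v *m G == c]| = #|[set v : 'rV[F]_m | v *m G == 0]|.
Proof.
case/imsetP=> v0 _ ->; rewrite -[RHS](card_imset _ (addIr v0)).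
apply: eq_card => v; rewrite inE; apply/eqP/imsetP => [eq_v|[u + ->]].
  by exists (v - v0); rewrite ?inE ?mulmxBl ?eq_v ?subrr ?subrK.
by rewrite inE mulmxDl => /eqP ->; rewrite add0r.
Qed.

Lemma card_preimage (Q : pred 'rV[F]_N) :
  #|[set v : 'rV[F]_m | Q (v *m G)]| =
  (#|[set c in [set v *m G | v : 'rV[F]_m] | Q c]| *
   #|[set v : 'rV[F]_m | v *m G == 0%R]|)%N.
Proof.
rewrite -sum1_card (partition_big (fun v => v *m G)
  (mem [set c in [set v *m G | v : 'rV[F]_m] | Q c])) /=; last first.
  by move=> v; rewrite !inE => ->; rewrite andbT; apply/imsetP; exists v.
rewrite -sum_nat_const; apply: eq_bigr => c; rewrite inE => /andP[c_in Qc].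
rewrite -(card_fiber c_in) -sum1_card; apply: eq_bigl => v; rewrite !inE.
by case: eqP => [->|]; rewrite ?Qc ?andbF.
Qed.

Variable U : {set 'I_m}.
Hypothesis kerG : forall v : 'rV[F]_m, (v *m G == 0) = [forall j in U, v 0 j == 0].

Let extend (x : 'rV[F]_#|U|) : 'rV[F]_m :=
  x *m rowsub (enum_val : 'I_#|U| -> 'I_m) 1%:M.

Let extendE x i : extend x 0 (enum_val i) = x 0 i.
Proof.
rewrite mxE (bigD1 i) //= big1 ?addr0 => [|i' ne_i'i]; first by rewrite !mxE eqxx mulr1.
by rewrite !mxE (inj_eq enum_val_inj) (negbTE ne_i'i) mulr0.
Qed.

Let extendG x : extend x *m G = x *m rowsub (enum_val : 'I_#|U| -> 'I_m) G.
Proof. by rewrite -mulmxA mul_rowsub_mx mul1mx. Qed.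

Lemma row_free_rowsub : row_free (rowsub (enum_val : 'I_#|U| -> 'I_m) G).
Proof.
apply: inj_row_free => x /eqP; rewrite -extendG kerG => /forall_inP x_vanish.
by apply/rowP => i; rewrite mxE -extendE; apply/eqP/x_vanish/enum_valP.
Qed.

Lemma image_mulmxE c :
  (c \in [set v *m G | v : 'rV[F]_m]) = (c <= rowsub (enum_val : 'I_#|U| -> 'I_m) G)%MS.
Proof.
apply/imsetP/submxP => [[v _ ->]|[x ->]]; last by exists (extend x); rewrite ?extendG.
exists (\row_i v 0 (enum_val i)); rewrite -extendG; apply/eqP; rewrite -subr_eq0 -mulmxBl.
rewrite kerG; apply/forall_inP => j j_in.
have := extendE (\row_i v 0 (enum_val i)) (enum_rank_in j_in j).
rewrite [RHS]mxE enum_rankK_in // => extend_j.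
by rewrite 2!mxE extend_j subrr.
Qed.

End LinearCode.

Theorem mainTheorem5 (F : finFieldType) (n : nat) (eta : F)
  (HF : #|F| = (2 ^ n)%N) (Heta : generates_field eta)
  (m : nat) (M : 'I_n -> {set 'I_m})
  (HM : forall i, M i != set0 /\ M i \proper [set: 'I_m]) :
  let Ds := Dstar eta M in
  let C := codeP Ds in
  let k := #|\bigcup_(j < n) M j| in
  let A := fun i : nat => #|[set c in C | wt c == i]| in
  let Z := fun i : nat => #|[set v : 'rV[F]_m | wt (cP Ds v) == i]| in
  (* C is a linear code of length 2^(sum |M_j|) - 1 and dimension k *)
  #|Ds| = (2 ^ (\sum_(j < n) #|M j|) - 1)%N /\
  (exists B : 'M[F]_(k, #|Ds|), row_free B /\ forall c, (c \in C) = (c <= B)%MS) /\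
  (* weight distribution *)
  Z 0%N = (2 ^ (n * (m - k)))%N /\
  (forall i : nat, (1 <= i <= #|Ds|)%N -> Z i = (Z 0%N * A i)%N).
Proof.
move=> Ds C k A Z.
have kerG (v : 'rV[F]_m) := Dstar_kernel M HF Heta v.
have CE : C = [set v *m pointsmx Ds | v : 'rV[F]_m].
  by apply: eq_imset => v; rewrite cP_pointsmx.
have ZE i : Z i = #|[set v : 'rV[F]_m | wt (v *m pointsmx Ds) == i]|.
  by apply: eq_card => v; rewrite !inE cP_pointsmx.
have Z0 : Z 0%N = #|[set v : 'rV[F]_m | v *m pointsmx Ds == 0]|.
  by rewrite ZE; apply: eq_card => v; rewrite !inE wt_eq0.
split; first exact: card_Dstar.
split.
  exists (rowsub enum_val (pointsmx Ds)); split; first exact: row_free_rowsub kerG.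
  by move=> c; rewrite CE (image_mulmxE kerG).
split; last by move=> i _; rewrite ZE Z0 (card_preimage _ (fun c => wt c == i)) mulnC /A CE.
by rewrite Z0 expnM -HF -card_rV_vanishing; apply: eq_card => v; rewrite !inE kerG.
Qed.
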